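(* Let $0<\alpha<1$ and $0<\gamma<1$, and for integers $t\ge1$ define $$S(t)\triangleq\sum_{i=1}^{t-1}\frac{(1-\gamma)\,\alpha^{t-i}}{1-\gamma^{i+1}}$$ (so $S(1)=0$). Let $t_0=\left\lceil \ln\!\left(\frac{1-\alpha}{1+\alpha-2\gamma\alpha}\right)\Big/\ln(\gamma)\right\rceil$ and $A_\gamma=\max\left\{\frac{(1-\gamma^{t_0})S(t_0)}{1-\gamma},\ \frac{2\alpha}{1-\alpha}\right\}$. Then for all integers $t\ge t_0$, $$S(t)\le\frac{A_\gamma(1-\gamma)}{1-\gamma^t}.$$ Furthermore, $$\lim_{t\to\infty}S(t)=\frac{(1-\gamma)\alpha}{1-\alpha}.$$
   Context: In the paper, $\alpha=(1-\eta\mu)^E$ is the contraction factor of $E$ gradient-descent steps with step size $\eta\in(0,\frac{2}{\mu+L}]$ on a $\mu$-strongly convex, $L$-smooth function, and $\gamma$ is a discount factor. *)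

From HB Require Import structures.
From mathcomp Require Import all_boot all_order all_algebra.
From mathcomp Require Import all_classical all_reals all_analysis.
Set Implicit Arguments. Unset Strict Implicit. Unset Printing Implicit Defensive.
Import Order.TTheory GRing.Theory Num.Theory.
Local Open Scope ring_scope.

Definition Ssum (R : realType) (alpha gamma : R) (t : nat) : R :=
  \sum_(1 <= i < t) ((1 - gamma) * alpha ^+ (t - i)) / (1 - gamma ^+ i.+1).

Definition t0 (R : realType) (alpha gamma : R) : int :=
  Num.ceil (ln ((1 - alpha) / (1 + alpha - 2 * gamma * alpha)) / ln gamma).

(* A_gamma = max { (1-gamma^t0) S(t0)/(1-gamma), 2 alpha/(1-alpha) };
   t0 >= 1 under the hypotheses, so we evaluate at the natural number |t0|. *)
Definition Agamma (R : realType) (alpha gamma : R) : R :=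
  Num.max ((1 - gamma ^+ `|t0 alpha gamma|%N) * Ssum alpha gamma `|t0 alpha gamma|%N
             / (1 - gamma))
          (2 * alpha / (1 - alpha)).

From HB Require Import structures.
From mathcomp Require Import all_boot all_order all_algebra.
From mathcomp Require Import all_classical all_reals all_analysis.
From mathcomp Require Import ring lra.
Import Order.TTheory GRing.Theory Num.Theory.
Local Open Scope classical_set_scope.
Local Open Scope ring_scope.

Set Implicit Arguments.
Unset Strict Implicit.

(* Everything rests on the recursion S(t+1) = alpha S(t) + (1-gamma) alpha/(1-gamma^(t+1)),
   valid for t >= 1.
   Bound: once gamma^t <= (1-alpha)/(1+alpha-2 gamma alpha), which is what t >= t0 means,
   alpha (1-gamma^(t+1)) <= (1+alpha)/2 (1-gamma^t), so the recursion maps the bound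
   (1-gamma^t) S(t) <= A (1-gamma) to itself: the new weighted value is at most
   (1+alpha)/2 A(1-gamma) + (1-alpha)/2 A(1-gamma), the second part absorbing the
   increment thanks to A >= 2 alpha/(1-alpha).
   Limit: the error e(t) = S(t+1) - L, with L = (1-gamma) alpha/(1-alpha), satisfies
   |e(t+1)| <= alpha |e(t)| + gamma^(t+2), hence decays geometrically. *)

Lemma geometric_majorant (R : realFieldType) (e : nat -> R) (a b : R) :
  0 <= a -> a < b -> (forall t, `|e t.+1| <= a * `|e t| + b ^+ t.+1) ->
  forall t, `|e t| <= Num.max `|e 0%N| (b / (b - a)) * b ^+ t.
Proof.
move=> a_ge0 a_lt_b e_rec; set C := Num.max _ _.
have b_le : b <= C * (b - a) by rewrite -ler_pdivrMr ?subr_gt0 // le_max lexx orbT.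
elim=> [|t IH]; first by rewrite expr0 mulr1 le_max lexx.
apply: le_trans (e_rec t) _.
have bt_ge0 : 0 <= b ^+ t by rewrite exprn_ge0 // (le_trans a_ge0) ?ltW.
have := ler_wpM2l a_ge0 IH; have := ler_wpM2r bt_ge0 b_le.
rewrite exprS; lra.
Qed.

Lemma cvg0_geometric_majorant (R : realType) (e : nat -> R) (a b : R) :
  0 <= a -> a < b -> b < 1 -> (forall t, `|e t.+1| <= a * `|e t| + b ^+ t.+1) ->
  e t @[t --> \oo] --> 0.
Proof.
move=> a_ge0 a_lt_b b_lt1 e_rec.
have b_norm : `|b| < 1 by rewrite ger0_norm // (le_trans a_ge0) ?ltW.
pose C := Num.max `|e 0%N| (b / (b - a)).
have upper : C * b ^+ t @[t --> \oo] --> 0.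
  by rewrite -(mulr0 C); apply: cvgMl_tmp; apply: cvg_expr.
have lower : - (C * b ^+ t) @[t --> \oo] --> 0 by rewrite -oppr0; apply: cvgN.
apply: (squeeze_cvgr _ lower upper).
by apply: nearW => t; rewrite -ler_norml geometric_majorant.
Qed.

Lemma subr_expr_gt0 (R : numDomainType) (x : R) n :
  0 <= x -> x < 1 -> (0 < n)%N -> 0 < 1 - x ^+ n.
Proof. by move=> x_ge0 x_lt1 n_gt0; rewrite subr_gt0 expr_lt1. Qed.

Lemma increment_gap (R : realFieldType) (a g : R) n :
  0 <= a -> a <= 1 -> 0 <= g -> g < 1 -> (0 < n)%N ->
  0 <= (1 - g) * a / (1 - g ^+ n) - (1 - g) * a <= g ^+ n.
Proof.
move=> a_ge0 a_le1 g_ge0 g_lt1 n_gt0.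
have den_gt0 := subr_expr_gt0 g_ge0 g_lt1 n_gt0.
have gn_le_g : g ^+ n <= g by rewrite -[leRHS]expr1 ler_wiXn2l // ltW.
have gn_ge0 : 0 <= g ^+ n by rewrite exprn_ge0.
have g1_ge0 : 0 <= 1 - g by rewrite subr_ge0 ltW.
have -> : (1 - g) * a / (1 - g ^+ n) - (1 - g) * a = (1 - g) * a * g ^+ n / (1 - g ^+ n).
  by field; rewrite gt_eqF.
rewrite divr_ge0 ?mulr_ge0 ?(ltW den_gt0) //= ler_pdivrMr //.
have : 0 <= (1 - g) * (1 - a) * g ^+ n by rewrite !mulr_ge0 // subr_ge0.
have : 0 <= (g - g ^+ n) * g ^+ n by rewrite mulr_ge0 // subr_ge0.
lra.
Qed.

Section Ssum_theory.
Context {R : realType} (a g : R).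

Lemma SsumS t : (0 < t)%N ->
  Ssum a g t.+1 = a * Ssum a g t + (1 - g) * a / (1 - g ^+ t.+1).
Proof.
move=> t_gt0; rewrite /Ssum big_nat_recr //= subSnn expr1 mulr_sumr.
congr (_ + _); apply: eq_big_nat => i /andP[_ lt_it].
by rewrite subSn 1?ltnW // exprS !mulrA [a * (1 - g)]mulrC.
Qed.

Lemma Ssum_ge0 t : 0 <= a -> 0 <= g -> g < 1 -> 0 <= Ssum a g t.
Proof.
move=> a_ge0 g_ge0 g_lt1; apply: sumr_ge0 => i _.
by rewrite divr_ge0 ?mulr_ge0 ?exprn_ge0 ?subr_ge0 ?exprn_ile1 ?(ltW g_lt1).
Qed.

Lemma weighted_SsumS B t : 0 <= a -> a < 1 -> 0 <= g -> g < 1 -> (0 < t)%N ->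
  g ^+ t * (1 + a - 2 * g * a) <= 1 - a -> 2 * a / (1 - a) <= B ->
  (1 - g ^+ t) * Ssum a g t <= B * (1 - g) ->
  (1 - g ^+ t.+1) * Ssum a g t.+1 <= B * (1 - g).
Proof.
move=> a_ge0 a_lt1 g_ge0 g_lt1 t_gt0 contraction B_ge IH.
have S_ge0 := Ssum_ge0 t a_ge0 g_ge0 g_lt1.
have den_gt0 := subr_expr_gt0 g_ge0 g_lt1 (ltn0Sn t).
have g1_ge0 : 0 <= 1 - g by rewrite subr_ge0 ltW.
have increment : 2 * a <= B * (1 - a) by rewrite -ler_pdivrMr ?subr_gt0.
rewrite SsumS // mulrDr [_ * (_ / _)]mulrC divfK ?gt_eqF //.
move: contraction den_gt0 IH S_ge0; rewrite exprS.
set u := g ^+ t; set S := Ssum a g t; clearbody u S => contraction den_gt0 IH S_ge0.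
have half_contraction : 2 * a * (1 - g * u) <= (1 + a) * (1 - u) by lra.
have := ler_wpM2r S_ge0 half_contraction.
have := ler_wpM2l (addr_ge0 ler01 a_ge0) IH.
have := ler_wpM2r g1_ge0 increment.
lra.
Qed.

Lemma weighted_Ssum_bound B N : 0 <= a -> a < 1 -> 0 <= g -> g < 1 -> (0 < N)%N ->
  (forall t, (N <= t)%N -> g ^+ t * (1 + a - 2 * g * a) <= 1 - a) ->
  2 * a / (1 - a) <= B -> (1 - g ^+ N) * Ssum a g N <= B * (1 - g) ->
  forall t, (N <= t)%N -> (1 - g ^+ t) * Ssum a g t <= B * (1 - g).
Proof.
move=> a_ge0 a_lt1 g_ge0 g_lt1 N_gt0 contraction B_ge base t /subnK <-.
elim: (t - N)%N => // k IH.
by rewrite addSn weighted_SsumS ?contraction ?leq_addl // addn_gt0 N_gt0 orbT.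
Qed.

Lemma contraction_den_gt0 : 0 <= a -> a < 1 -> g <= 1 -> 0 < 1 + a - 2 * g * a.
Proof. by move=> *; nra. Qed.

Lemma t0_gt0 : 0 < a -> a < 1 -> 0 < g -> g < 1 -> 0 < t0 a g.
Proof.
move=> a_gt0 a_lt1 g_gt0 g_lt1.
have den_gt0 := contraction_den_gt0 (ltW a_gt0) a_lt1 (ltW g_lt1).
have q_gt0 : 0 < (1 - a) / (1 + a - 2 * g * a) by rewrite divr_gt0 // subr_gt0.
have q_lt1 : (1 - a) / (1 + a - 2 * g * a) < 1 by rewrite ltr_pdivrMr // mul1r; nra.
by rewrite /t0 ceil_gt_int ltr_ndivlMr ?ln_lt0 ?g_gt0 // mul0r ln_lt0 ?q_gt0.
Qed.

Lemma t0_contraction t : 0 < a -> a < 1 -> 0 < g -> g < 1 ->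
  t0 a g <= t%:Z -> g ^+ t * (1 + a - 2 * g * a) <= 1 - a.
Proof.
move=> a_gt0 a_lt1 g_gt0 g_lt1.
have den_gt0 := contraction_den_gt0 (ltW a_gt0) a_lt1 (ltW g_lt1).
have q_pos : (1 - a) / (1 + a - 2 * g * a) \is Num.pos.
  by rewrite posrE divr_gt0 // subr_gt0.
have gt_pos : g ^+ t \is Num.pos by rewrite posrE exprn_gt0.
rewrite /t0 ceil_le_int ler_ndivrMr ?ln_lt0 ?g_gt0 // => le_ln.
rewrite -ler_pdivlMr // -(ler_ln gt_pos q_pos) lnXn //.
by apply: le_trans le_ln; rewrite -pmulrn mulr_natl.
Qed.

Lemma weighted_Ssum_le_Agamma t : 0 < a -> a < 1 -> 0 < g -> g < 1 ->
  t0 a g <= t%:Z -> (1 - g ^+ t) * Ssum a g t <= Agamma a g * (1 - g).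
Proof.
move=> a_gt0 a_lt1 g_gt0 g_lt1.
have t0_pos := t0_gt0 a_gt0 a_lt1 g_gt0 g_lt1.
have t0_nat : t0 a g = `|t0 a g|%N :> int by rewrite gez0_abs // ltW.
rewrite t0_nat lez_nat.
apply: (weighted_Ssum_bound (ltW a_gt0) a_lt1 (ltW g_gt0) g_lt1).
- by rewrite -ltz_nat -t0_nat.
- by move=> s le_s; apply: t0_contraction; rewrite // t0_nat lez_nat.
- by rewrite /Agamma le_max lexx orbT.
- by rewrite -ler_pdivrMr ?subr_gt0 // /Agamma le_max lexx.
Qed.

Lemma Ssum_cvg : 0 <= a -> a < 1 -> 0 <= g -> g < 1 ->
  Ssum a g t @[t --> \oo] --> (1 - g) * a / (1 - a).
Proof.
move=> a_ge0 a_lt1 g_ge0 g_lt1; set L := (1 - g) * a / (1 - a).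
have L_fix : L = a * L + (1 - g) * a by rewrite /L; field; rewrite subr_eq0 gt_eqF.
have a_le_m : a <= Num.max a g by rewrite le_max lexx.
have g_le_m : g <= Num.max a g by rewrite le_max lexx orbT.
have m_lt1 : Num.max a g < 1 by rewrite gt_max a_lt1 g_lt1.
set b := (1 + Num.max a g) / 2.
have a_lt_b : a < b by rewrite /b; lra.
have g_le_b : g <= b by rewrite /b; lra.
have b_lt1 : b < 1 by rewrite /b; lra.
rewrite -(@cvg_shiftS R^o) -subr_cvg0 /=.
apply: (cvg0_geometric_majorant a_ge0 a_lt_b b_lt1) => t.
rewrite SsumS //; set c := (1 - g) * a / (1 - g ^+ t.+2).
have -> : a * Ssum a g t.+1 + c - L = a * (Ssum a g t.+1 - L) + (c - (1 - g) * a).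
  by rewrite {1}L_fix; ring.
apply: le_trans (ler_normD _ _) _; rewrite normrM ger0_norm // lerD2l.
have /andP[gap_ge0 gap_le] := increment_gap a_ge0 (ltW a_lt1) g_ge0 g_lt1 (ltn0Sn t.+1).
rewrite ger0_norm //; apply: le_trans gap_le _.
rewrite exprS; apply: le_trans (ler_piMl (exprn_ge0 _ g_ge0) (ltW g_lt1)) _.
by rewrite lerXn2r ?nnegrE ?(le_trans g_ge0).
Qed.

End Ssum_theory.

Theorem proposition2 (R : realType) (alpha gamma : R)
  (ha0 : 0 < alpha) (ha1 : alpha < 1) (hg0 : 0 < gamma) (hg1 : gamma < 1) :
  (forall t : nat, t0 alpha gamma <= t%:Z ->
     Ssum alpha gamma t <= Agamma alpha gamma * (1 - gamma) / (1 - gamma ^+ t)) /\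
  (Ssum alpha gamma t @[t --> \oo] --> (1 - gamma) * alpha / (1 - alpha)).
Proof.
split=> [t le_t0_t|]; last exact: Ssum_cvg (ltW ha0) ha1 (ltW hg0) hg1.
have t_gt0 : (0 < t)%N by rewrite -ltz_nat (lt_le_trans (t0_gt0 ha0 ha1 hg0 hg1)).
have den_gt0 := subr_expr_gt0 (ltW hg0) hg1 t_gt0.
by rewrite ler_pdivlMr // mulrC weighted_Ssum_le_Agamma.
Qed.
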